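(* For all $n\ge 1$, \[\left|\mathrm{Av}_n[\overline{123},\overline{321}]\right|=\begin{cases}1 & n=1,\\ 0 & n\ge 3 \text{ odd},\\ U_{n-1} & n\ge 2\text{ even},\end{cases}\] where $U_m$ is the number of up-down permutations of length $m$.
   Context: For $\sigma\in S_n$, the cyclic permutation $[\sigma]$ is the set of all rotations of $\sigma$; $[S_n]$ is the set of cyclic permutations of length $n$. A vincular pattern is a permutation $\pi\in S_k$ with some pairs of adjacent positions joined by an overline; a linear permutation $\tau$ contains it if $\tau$ has a subsequence order-isomorphic to $\pi$ whose entries corresponding to overlined adjacent positions are adjacent in $\tau$. $[\sigma]$ contains $[\pi]$ if some rotation of $\sigma$ contains $\pi$. $\mathrm{Av}_n[\overline{123},\overline{321}]$ is the set of $[\sigma]\in[S_n]$ avoiding both $[\overline{123}]$ and $[\overline{321}]$ (i.e. with no three cyclically consecutive entries increasing or decreasing). An up-down permutation of length $m$ is $\sigma\in S_m$ with $\sigma_1<\sigma_2>\sigma_3<\sigma_4>\cdots$. *)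

From mathcomp Require Import all_boot all_order all_fingroup.
Set Implicit Arguments. Unset Strict Implicit. Unset Printing Implicit Defensive.

(* One-line notation of a permutation sigma in S_n (values 0..n-1,
   order-isomorphic to the usual 1..n convention). *)
Definition pseq (n : nat) (s : 'S_n) : seq nat := [seq val (s i) | i <- enum 'I_n].

(* Linear containment of the vincular pattern 123-bar (all three entries
   adjacent): three consecutive increasing entries. *)
Definition has_consec_inc (s : seq nat) : bool :=
  has (fun j => (nth 0 s j < nth 0 s j.+1) && (nth 0 s j.+1 < nth 0 s j.+2))
      (iota 0 (size s - 2)).

Definition has_consec_dec (s : seq nat) : bool :=
  has (fun j => (nth 0 s j > nth 0 s j.+1) && (nth 0 s j.+1 > nth 0 s j.+2))
      (iota 0 (size s - 2)).

Definition cyc_class (n : nat) (s : 'S_n) : {set 'S_n} :=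
  [set t : 'S_n | [exists k : 'I_n, pseq t == rot k (pseq s)]].

Definition cyc_avoids (n : nat) (s : 'S_n) : bool :=
  [forall k : 'I_n.+1,
     ~~ has_consec_inc (rot k (pseq s)) && ~~ has_consec_dec (rot k (pseq s))].

Definition Av_cyc (n : nat) : {set {set 'S_n}} :=
  [set cyc_class s | s in [pred s : 'S_n | cyc_avoids s]].

Definition updown (s : seq nat) : bool :=
  all (fun i => if odd i then nth 0 s i > nth 0 s i.+1 else nth 0 s i < nth 0 s i.+1)
      (iota 0 (size s).-1).

Definition U (m : nat) : nat := #|[set s : 'S_m | updown (pseq s)]|.

From mathcomp Require Import all_boot all_order all_fingroup.
From mathcomp Require Import zify.
Set Implicit Arguments. Unset Strict Implicit. Unset Printing Implicit Defensive.

(* A cyclic arrangement of distinct numbers has no three cyclically consecutive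
   monotone entries exactly when its ascents and descents alternate around the
   cycle.  Going once around the cycle must then restore the parity of the
   position, so for n >= 3 the length n is even.  For n even, rotating the
   maximum to the last position picks one representative in each class; the
   step into the maximum is an ascent and the step out of it a descent, so the
   alternation holds exactly when the first n - 1 entries form an up-down
   permutation. *)

Lemma modnS_mod m d : (m %% d).+1 %% d = m.+1 %% d.
Proof. by rewrite -addn1 modnDml addn1. Qed.

Lemma modnS_neq m d : 1 < d -> m %% d != m.+1 %% d.
Proof.
move=> d2; rewrite -modnS_mod; have := ltn_pmod m (ltnW d2); set r := m %% d => hr.
have [lt|ge] := ltnP r.+1 d; first by rewrite modn_small //; lia.
have -> : r.+1 = d by lia.
by rewrite modnn; lia.
Qed.

Lemma nth_rot_mod (p : seq nat) k j : k <= size p -> j < size p ->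
  nth 0 (rot k p) j = nth 0 p ((k + j) %% size p).
Proof.
move=> hk hj; rewrite nth_cat size_drop; case: ltnP => h.
  by rewrite nth_drop modn_small //; lia.
rewrite nth_take; last by lia.
have -> : k + j = (j - (size p - k)) + size p by lia.
by rewrite modnDr modn_small //; lia.
Qed.

Definition avoids_mono3 (q : seq nat) := ~~ has_consec_inc q && ~~ has_consec_dec q.

Definition no_mono3_at (q : seq nat) j :=
  ~~ ((nth 0 q j < nth 0 q j.+1) && (nth 0 q j.+1 < nth 0 q j.+2))
  && ~~ ((nth 0 q j > nth 0 q j.+1) && (nth 0 q j.+1 > nth 0 q j.+2)).

Definition cyc_asc (p : seq nat) i :=
  nth 0 p (i %% size p) < nth 0 p (i.+1 %% size p).

Definition alternating (p : seq nat) := forall i, cyc_asc p i != cyc_asc p i.+1.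

Lemma avoids_mono3E q : avoids_mono3 q = all (no_mono3_at q) (iota 0 (size q - 2)).
Proof. by rewrite all_predI !all_predC. Qed.

Lemma avoids_mono3_small q : size q <= 2 -> avoids_mono3 q.
Proof. by move=> q2; rewrite avoids_mono3E (_ : size q - 2 = 0) //; lia. Qed.

Lemma not_mono3 a b c : a != b -> b != c ->
  ~~ ((a < b) && (b < c)) && ~~ ((a > b) && (b > c)) = ((a < b) != (b < c)).
Proof. by case: ltngtP => // _ _; case: ltngtP. Qed.

Lemma cyc_asc_mod p i : cyc_asc p (i %% size p) = cyc_asc p i.
Proof. by rewrite /cyc_asc modn_mod modnS_mod. Qed.

Lemma no_mono3_at_rot (p : seq nat) k j : uniq p -> k <= size p -> j.+2 < size p ->
  no_mono3_at (rot k p) j = (cyc_asc p (k + j) != cyc_asc p (k + j).+1).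
Proof.
move=> up hk hj; have nth_neq i : nth 0 p (i %% size p) != nth 0 p (i.+1 %% size p).
  by rewrite nth_uniq ?ltn_pmod ?modnS_neq //; lia.
by rewrite /no_mono3_at !nth_rot_mod ?addnS ?not_mono3 //; lia.
Qed.

Lemma rot_avoids_mono3P (p : seq nat) : 3 <= size p -> uniq p ->
  (forall k, k <= size p -> avoids_mono3 (rot k p)) <-> alternating p.
Proof.
move=> p3 up; split=> [avk i | alt k hk].
  have asc_succ : cyc_asc p (i %% size p).+1 = cyc_asc p i.+1.
    by rewrite -cyc_asc_mod modnS_mod cyc_asc_mod.
  have ki : i %% size p <= size p by rewrite ltnW ?ltn_pmod //; lia.
  rewrite -cyc_asc_mod -asc_succ -[i %% size p]addn0 -no_mono3_at_rot //.
  move: (avk _ ki); rewrite avoids_mono3E size_rot => /allP/(_ 0).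
  by rewrite mem_iota; apply; lia.
rewrite avoids_mono3E size_rot; apply/allP => j; rewrite mem_iota => hj.
by rewrite no_mono3_at_rot ?alt //; lia.
Qed.

Lemma alternating_parity p i : alternating p -> cyc_asc p i = cyc_asc p 0 (+) odd i.
Proof.
move=> alt; elim: i => [|i IHi]; first by rewrite addbF.
by move: (alt i); rewrite IHi /=; case: (cyc_asc _ _) (cyc_asc _ _) (odd i) => [] [] [].
Qed.

Lemma alternating_even_size p : 0 < size p -> alternating p -> ~~ odd (size p).
Proof.
move=> p0 /(alternating_parity (size p)).
by rewrite -cyc_asc_mod modnn; case: (cyc_asc p 0); case: (odd _).
Qed.

Lemma alternating_of_parity p b : 0 < size p -> ~~ odd (size p) ->
  (forall i, i < size p -> cyc_asc p i = b (+) odd i) -> alternating p.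
Proof.
move=> p0 ev par i.
rewrite -cyc_asc_mod -(cyc_asc_mod p i.+1) !par ?ltn_pmod // !odd_mod ?(negbTE ev) //=.
by rewrite addbN; case: (_ (+) _).
Qed.

Lemma updownP (q : seq nat) : uniq q ->
  reflect (forall i, i.+1 < size q -> (nth 0 q i < nth 0 q i.+1) = ~~ odd i) (updown q).
Proof.
move=> uq; have neq i : i.+1 < size q -> nth 0 q i != nth 0 q i.+1.
  by move=> hi; rewrite nth_uniq ?ltn_eqF ?(ltnW hi).
apply: (iffP allP) => ud i => [hi | ].
  by have := ud i; rewrite mem_iota; case: (odd i) (neq i hi) => /=; lia.
rewrite mem_iota => hi; have {}hi : i.+1 < size q by lia.
by have := ud i hi; case: (odd i) (neq i hi) => /=; lia.
Qed.

Lemma cyc_asc_rcons (q : seq nat) x i : i.+1 < size q ->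
  cyc_asc (rcons q x) i = (nth 0 q i < nth 0 q i.+1).
Proof.
move=> hi; have hi' := ltnW hi.
by rewrite /cyc_asc size_rcons !modn_small ?nth_rcons ?hi ?hi' // ltnW.
Qed.

Lemma cyc_asc_to_max (q : seq nat) x i : i.+1 = size q -> all (fun y => y < x) q ->
  cyc_asc (rcons q x) i.
Proof.
move=> sq /allP qx; rewrite /cyc_asc size_rcons -sq !modn_small //.
by rewrite !nth_rcons -sq ltnSn ltnn eqxx qx // mem_nth // -sq.
Qed.

Lemma cyc_asc_from_max (q : seq nat) x : 0 < size q -> all (fun y => y < x) q ->
  cyc_asc (rcons q x) (size q) = false.
Proof.
move=> q0 /allP qx; rewrite /cyc_asc size_rcons modnn modn_small //.
by rewrite !nth_rcons ltnn eqxx q0; apply/negbTE; rewrite -leqNgt ltnW // qx // mem_nth.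
Qed.

Lemma alternating_rcons_max (q : seq nat) x :
    odd (size q) -> uniq q -> all (fun y => y < x) q ->
  alternating (rcons q x) <-> updown q.
Proof.
move=> oq uq qx; have q0 : 0 < size q by case: (size q) oq.
have from_max := cyc_asc_from_max q0 qx.
split=> [alt | /(updownP uq) ud].
  have asc0 : cyc_asc (rcons q x) 0.
    by move: (alternating_parity (size q) alt); rewrite from_max oq; case: (cyc_asc _ 0).
  apply/(updownP uq) => i hi.
  by rewrite -(cyc_asc_rcons x hi) (alternating_parity i alt) asc0.
apply: (alternating_of_parity (b := true)); rewrite ?size_rcons //= ?oq // => i.
rewrite ltnS leq_eqVlt => /predU1P [-> | ]; first by rewrite from_max oq.
rewrite leq_eqVlt => /predU1P [eq_i | lt_i]; last by rewrite cyc_asc_rcons ?ud.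
by move: oq; rewrite cyc_asc_to_max // -eq_i /= => ->.
Qed.

Lemma size_pseq n (s : 'S_n) : size (pseq s) = n.
Proof. by rewrite size_map size_enum_ord. Qed.

Lemma nth_pseq n (s : 'S_n) (i : 'I_n) : nth 0 (pseq s) i = s i.
Proof. by rewrite (nth_map i) ?size_enum_ord // nth_ord_enum. Qed.

Lemma pseq_inj n : injective (@pseq n).
Proof.
move=> s t eq_st; apply/permP => i; apply: val_inj.
by rewrite /= -!nth_pseq eq_st.
Qed.

Lemma pseq_uniq n (s : 'S_n) : uniq (pseq s).
Proof. by rewrite map_inj_uniq ?enum_uniq // => i j /val_inj/perm_inj. Qed.

Lemma pseq_bounded n (s : 'S_n) : all (fun y => y < n) (pseq s).
Proof. by apply/allP => y; rewrite /pseq => /mapP[i _ ->]; apply: ltn_ord. Qed.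

Lemma cyc_avoidsE n (s : 'S_n) :
  cyc_avoids s <-> forall k, k <= n -> avoids_mono3 (rot k (pseq s)).
Proof.
split=> [av k hk | av]; first exact: (forallP av (Ordinal (hk : k < n.+1))).
by apply/forallP => k; apply: av; rewrite -ltnS.
Qed.

Lemma cyc_avoids_small n (s : 'S_n) : n <= 2 -> cyc_avoids s.
Proof.
by move=> n2; apply/cyc_avoidsE => k _; rewrite avoids_mono3_small // size_rot size_pseq.
Qed.

Lemma cyc_avoids_alternating n (s : 'S_n) : 3 <= n -> cyc_avoids s <-> alternating (pseq s).
Proof. by move=> n3; rewrite cyc_avoidsE -rot_avoids_mono3P ?pseq_uniq ?size_pseq. Qed.

Lemma cyc_avoids_odd n (s : 'S_n) : odd n -> 3 <= n -> ~~ cyc_avoids s.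
Proof.
move=> on n3; apply/negP => /(cyc_avoids_alternating s n3) alt.
have s0 : 0 < size (pseq s) by rewrite size_pseq; lia.
by have := alternating_even_size s0 alt; rewrite size_pseq on.
Qed.

Local Notation ext_max := (lift_perm ord_max ord_max).

Lemma pseq_ext_max m (t : 'S_m) : pseq (ext_max t : 'S_m.+1) = rcons (pseq t) m.
Proof.
apply: (@eq_from_nth _ 0) => [|i]; first by rewrite size_rcons !size_pseq.
rewrite size_pseq => lt_i; rewrite -[i]/(val (Ordinal lt_i)) nth_pseq nth_rcons size_pseq /=.
have [lt_im | ge_im] := ltnP i m.
  have -> : Ordinal lt_i = lift ord_max (Ordinal lt_im).
    by apply: val_inj; rewrite /= /bump leqNgt lt_im.
  by rewrite lift_perm_lift lift_max -[i]/(val (Ordinal lt_im)) nth_pseq.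
have eq_im : i = m by lia.
subst i; have -> : Ordinal lt_i = ord_max by apply: val_inj.
by rewrite lift_perm_id eqxx.
Qed.

Lemma cyc_avoids_ext_max m (t : 'S_m) : odd m ->
  cyc_avoids (ext_max t : 'S_m.+1) <-> updown (pseq t).
Proof.
move=> om; have [m1 | m3] : m = 1 \/ 3 <= m.+1.
  by case: m om t => [|[|m]] //= _ _; [left | right].
  by subst m; rewrite /updown size_pseq; split=> // _; apply: cyc_avoids_small.
rewrite (cyc_avoids_alternating _ m3) pseq_ext_max.
by apply: alternating_rcons_max; rewrite ?size_pseq ?pseq_uniq ?pseq_bounded.
Qed.

Section CyclicShift.

Variable m : nat.
Local Notation n := m.+1.
Local Open Scope group_scope.

Definition cyc_shift : 'S_n := perm (@ordS_inj n).

Lemma cyc_shiftX k (i : 'I_n) : val ((cyc_shift ^+ k) i) = (k + i) %% n.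
Proof.
elim: k => [|k IHk]; first by rewrite expg0 perm1 add0n modn_small.
by rewrite expgSr permM permE /= IHk modnS_mod.
Qed.

Lemma cyc_shift_order : cyc_shift ^+ n = 1.
Proof. by apply/permP => i; apply: val_inj; rewrite cyc_shiftX perm1 modnDl modn_small. Qed.

Lemma cyc_shiftX_fixpoint k i : (cyc_shift ^+ k) i = i -> cyc_shift ^+ k = 1.
Proof.
move/(congr1 val); rewrite cyc_shiftX /= => shift_i.
have /eqP k0 : k == 0 %[mod n] by rewrite -(eqn_modDr i) shift_i add0n modn_small.
apply/permP => j; apply: val_inj.
by rewrite cyc_shiftX perm1 -modnDml k0 mod0n add0n modn_small.
Qed.

Lemma pseq_cyc_shiftX (s : 'S_n) k : k <= n -> pseq (cyc_shift ^+ k * s) = rot k (pseq s).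
Proof.
move=> le_kn; apply: (@eq_from_nth _ 0) => [|i]; first by rewrite size_rot !size_pseq.
rewrite size_pseq => lt_i; rewrite -[i]/(val (Ordinal lt_i)) nth_pseq permM.
by rewrite nth_rot_mod ?size_pseq // -cyc_shiftX nth_pseq.
Qed.

Lemma cyc_classE (s : 'S_n) : cyc_class s = <[cyc_shift]> :* s.
Proof.
apply/setP => t; rewrite inE.
apply/existsP/rcosetP => [[k /eqP pseq_t] | [_ /cycleP[k ->] ->]].
  exists (cyc_shift ^+ k); first exact: mem_cycle.
  by apply: pseq_inj; rewrite pseq_cyc_shiftX // ltnW.
exists (Ordinal (ltn_pmod k (ltn0Sn m))).
by rewrite -(expg_mod _ cyc_shift_order) pseq_cyc_shiftX //= ltnW // ltn_pmod.
Qed.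

Lemma cyc_avoids_cyc_shiftX (s : 'S_n) k : cyc_avoids s -> cyc_avoids (cyc_shift ^+ k * s).
Proof.
have le_kn : k %% n <= n by rewrite ltnW ?ltn_pmod.
move/cyc_avoidsE => av; apply/cyc_avoidsE => j _.
have := leq_rot_add (k %% n) j (pseq s); rewrite size_pseq => le_add.
by rewrite -(expg_mod _ cyc_shift_order) pseq_cyc_shiftX // rot_rot_add av.
Qed.

End CyclicShift.

Section Representatives.

Variable m : nat.
Local Notation n := m.+1.
Local Open Scope group_scope.

Lemma ext_max_inj : injective (ext_max : 'S_m -> 'S_n).
Proof.
move=> t t' eq_tt'; apply/permP => i; apply: (@lift_inj _ ord_max).
by rewrite -!(lift_perm_lift ord_max ord_max) eq_tt'.
Qed.

Lemma im_ext_max : [set ext_max t | t : 'S_m] = [set s : 'S_n | s ord_max == ord_max].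
Proof.
have fix_maxE (s : 'S_n) : (s ord_max == ord_max) = perm_on [set~ ord_max] s.
  apply/eqP/idP => [s_max | /out_perm -> //]; last by rewrite !inE eqxx.
  by apply/subsetP => i; rewrite !inE; apply: contraNneq => ->; rewrite s_max.
apply/eqP; rewrite eqEcard; apply/andP; split.
  by apply/subsetP => _ /imsetP[t _ ->]; rewrite inE lift_perm_id.
rewrite card_imset; last exact: ext_max_inj.
rewrite (eq_card (B := perm_on [set~ ord_max])) => [|s]; last by rewrite inE fix_maxE.
by rewrite card_perm cardsC1 !card_ord card_Sn.
Qed.

Lemma Av_cyc_fix_max :
  Av_cyc n = @cyc_class n @: [set s : 'S_n | cyc_avoids s & s ord_max == ord_max].
Proof.
apply/setP => X; apply/imsetP/imsetP => [[s av_s ->] | [s]]; last first.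
  by rewrite inE => /andP[av_s _] ->; exists s.
pose k := (s^-1 ord_max).+1.
have shift_k : (cyc_shift m ^+ k) ord_max = s^-1 ord_max.
  by apply: val_inj; rewrite cyc_shiftX /= addSn -addnS modnDr modn_small.
exists (cyc_shift m ^+ k * s).
  by rewrite inE cyc_avoids_cyc_shiftX //= permM shift_k permKV.
by rewrite !cyc_classE rcosetM (rcoset_id (mem_cycle _ k)).
Qed.

Lemma cyc_class_fix_max_inj :
  {in [set s : 'S_n | s ord_max == ord_max] &, injective (@cyc_class n)}.
Proof.
move=> s t; rewrite !inE => /eqP s_max /eqP t_max; rewrite !cyc_classE => /rcoset_eqP.
case/rcosetP => _ /cycleP[k ->] s_eq.
suff shift1 : cyc_shift m ^+ k = 1 by rewrite s_eq shift1 mul1g.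
apply: (@cyc_shiftX_fixpoint _ _ ord_max); apply: (@perm_inj _ t).
by rewrite -permM -s_eq s_max t_max.
Qed.

Lemma card_Av_cyc : #|Av_cyc n| = #|[set t : 'S_m | cyc_avoids (ext_max t : 'S_n)]|.
Proof.
rewrite Av_cyc_fix_max.
have fix_maxE (s : 'S_n) : (s ord_max == ord_max) = (s \in [set ext_max t | t : 'S_m]).
  by rewrite im_ext_max inE.
have -> : [set s : 'S_n | cyc_avoids s & s ord_max == ord_max] =
    ext_max @: [set t : 'S_m | cyc_avoids (ext_max t : 'S_n)].
  apply/setP => s; rewrite inE fix_maxE.
  apply/andP/imsetP => [[av_s /imsetP[t _ s_eq]] | [t av_t ->]].
    by exists t; rewrite // inE -s_eq.
  by rewrite inE in av_t; split; last exact: imset_f.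
rewrite card_in_imset ?card_imset //; first exact: ext_max_inj.
move=> _ _ /imsetP[t _ ->] /imsetP[t' _ ->].
by apply: cyc_class_fix_max_inj; rewrite inE fix_maxE imset_f.
Qed.

End Representatives.

Theorem proposition4p2 (n : nat) : 1 <= n ->
  #|Av_cyc n| = (if n == 1 then 1 else if odd n then 0 else U n.-1).
Proof.
case: n => [// | [| m]] _; rewrite card_Av_cyc /= ?negbK.
  have -> : [set t : 'S_0 | cyc_avoids (ext_max t : 'S_1)] = setT.
    by apply/setP => t; rewrite !inE cyc_avoids_small.
  by rewrite cardsT card_Sn.
case: ifP => [odd_m | even_m].
  apply/eqP; rewrite cards_eq0; apply/eqP/setP => t; rewrite !inE.
  apply/negbTE/cyc_avoids_odd; first by rewrite /= negbK.
  by case: m odd_m t.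
have odd_m1 : odd m.+1 by rewrite /= even_m.
rewrite /U; apply: eq_card => t; rewrite !inE.
by apply/idP/idP => /(cyc_avoids_ext_max t odd_m1).
Qed.
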